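(* Let $\alpha\in(0,1)$ and $\nu\in\mathbb{N}$ with $2\nu>1/(1-\alpha)$, and let $K_{\alpha,\nu}(x)=\sum_{k=0}^{\infty}2^{-2\alpha\nu k}\phi(2^{2\nu k}x)$, where $\phi$ is the $2$-periodic function with $\phi(x)=|x|$ on $[-1,1]$. Then for every $x\in\mathbb{R}$ and every $\beta\in(\alpha,1]$, \[ \limsup_{t\to0}\frac{|K_{\alpha,\nu}(x+t)-K_{\alpha,\nu}(x)|}{|t|^{\beta}}=+\infty; \] hence $K_{\alpha,\nu}$ is at no point pointwise H\''older continuous of order $\beta$, and in particular (case $\beta=1$) $K_{\alpha,\nu}$ is differentiable at no point of $\mathbb{R}$. Moreover, for every $M\ge1$, \[ \limsup_{t\to0}\frac{1}{2M}\int_{-M}^{M}\left|\frac{K_{\alpha,\nu}(x+t)-K_{\alpha,\nu}(x)}{t}\right|dx=+\infty, \] so the difference quotients of $K_{\alpha,\nu}$ are unbounded in $L^1_{loc}(\mathbb{R})$ and the distributional derivative of $K_{\alpha,\nu}$ is not a signed (Radon) measure, i.e. $K_{\alpha,\nu}$ is not of locally bounded variation.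
   Context: A function $f\in C^0(\mathbb{R})$ is called (pointwise) H\''older continuous of order $\beta$ at $x$ if there exist $r,C>0$ with $|f(y)-f(x)|\le C|y-x|^{\beta}$ for all $y\in[x-r,x+r]$. *)

From Stdlib Require Import Reals Lra List Sorted.
From Coquelicot Require Import Coquelicot.
Open Scope R_scope.

(* phi : the 2-periodic function with phi x = |x| on [-1,1],
   i.e. the distance from x to the nearest even integer.
   Int_part is the floor function. *)
Definition phi (x : R) : R := Rabs (x - 2 * IZR (Int_part ((x + 1) / 2))).

Definition K (alpha : R) (nu : nat) (x : R) : R :=
  Series (fun k : nat =>
    Rpower 2 (- (2 * alpha * INR nu * INR k)) * phi (2 ^ (2 * nu * k) * x)).

(* |t|^beta, with 0^beta = 0 (beta > 0 throughout) *)
Definition abs_pow (t beta : R) : R :=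
  if Req_EM_T t 0 then 0 else Rpower (Rabs t) beta.

Definition holder_at (f : R -> R) (x beta : R) : Prop :=
  exists r C, 0 < r /\ 0 < C /\
    forall y, x - r <= y <= x + r -> Rabs (f y - f x) <= C * abs_pow (y - x) beta.

Definition limsup_at0_pinfty (g : R -> R) : Prop :=
  forall C r, 0 < r -> exists t, 0 < Rabs t < r /\ C < g t.

Fixpoint var_sum (f : R -> R) (l : list R) : R :=
  match l with
  | x :: ((y :: _) as t) => Rabs (f y - f x) + var_sum f t
  | _ => 0
  end.

Definition bounded_variation (f : R -> R) (a b : R) : Prop :=
  exists V, forall l : list R,
    (forall x, In x l -> a <= x <= b) -> Sorted Rle l -> var_sum f l <= V.

Definition locally_BV (f : R -> R) : Prop :=
  forall a b, a < b -> bounded_variation f a b.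

(* With a = 2^(-2 alpha nu) and b = 2^(2 nu), K x = sum_k a^k phi (b^k x) and a b > 2.
   Take an increment h = ±1/(2 b^n) chosen so that b^n x and b^n (x + h) lie in one unit
   interval. Every term k > n is unchanged since b^k h is an even integer, the n-th term
   moves by exactly a^n/2, and the terms k < n move by at most a^n/(2 (a b - 1)) in total.
   Hence |K (x + h) - K x| >= c a^n with c > 0, i.e. a fixed fraction of |h|^alpha, which
   beats |h|^beta for beta > alpha. Summing this over the b^n cells of [0, 1] bounds both the
   L^1 norm of the difference quotient and the variation of K from below by c (a b)^n. *)
From Stdlib Require Import Reals Lra Lia ZArith List Sorted.
From Coquelicot Require Import Coquelicot.
Open Scope R_scope.

Lemma phi_eq_dist_even y p : Rabs (y - 2 * IZR p) <= 1 -> phi y = Rabs (y - 2 * IZR p).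
Proof.
  intros Hyp. unfold phi. set (q := Int_part ((y + 1) / 2)).
  destruct (base_Int_part ((y + 1) / 2)) as [Hq1 Hq2]. fold q in Hq1, Hq2. clearbody q.
  apply Rabs_le_between in Hyp.
  assert (Hle : IZR (q - p) <= 1) by (rewrite minus_IZR; lra).
  assert (Hgt : IZR (q - p) > -1) by (rewrite minus_IZR; lra).
  apply le_IZR in Hle. apply Rgt_lt, lt_IZR in Hgt.
  assert (q = p \/ q = p + 1)%Z as [-> | ->] by lia; [reflexivity|].
  (* [q = p + 1] only when [y] is the odd integer [2p + 1], where both distances are 1. *)
  rewrite plus_IZR in *. assert (y = 2 * IZR p + 1) as -> by lra.
  rewrite Rabs_left, Rabs_right; lra.
Qed.

Lemma phi_floor_dist_le1 y : Rabs (y - 2 * IZR (Int_part ((y + 1) / 2))) <= 1.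
Proof. destruct (base_Int_part ((y + 1) / 2)). apply Rabs_le; lra. Qed.

Lemma phi_le_dist_even y p : phi y <= Rabs (y - 2 * IZR p).
Proof.
  destruct (Rle_lt_dec 1 (Rabs (y - 2 * IZR p))).
  - pose proof (phi_floor_dist_le1 y). unfold phi. lra.
  - rewrite (phi_eq_dist_even y p); lra.
Qed.

Lemma phi_bounds y : 0 <= phi y <= 1.
Proof. split; [apply Rabs_pos | apply phi_floor_dist_le1]. Qed.

Lemma phi_periodic y m : phi (y + 2 * IZR m) = phi y.
Proof.
  pose proof (phi_floor_dist_le1 y). set (q := Int_part ((y + 1) / 2)) in *.
  rewrite (phi_eq_dist_even _ (q + m)); rewrite plus_IZR.
  - unfold phi. fold q. f_equal. ring.
  - replace (y + 2 * IZR m - 2 * (IZR q + IZR m)) with (y - 2 * IZR q) by ring. lra.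
Qed.

Lemma phi_isometric_unit_interval m y z :
  IZR m <= y <= IZR m + 1 -> IZR m <= z <= IZR m + 1 -> Rabs (phi y - phi z) = Rabs (y - z).
Proof.
  intros Hy Hz. destruct (Zeven_odd_dec m) as [He | Ho].
  - apply Zeven_ex in He as [p ->]. rewrite mult_IZR in *.
    rewrite (phi_eq_dist_even y p), (phi_eq_dist_even z p) by (apply Rabs_le; lra).
    rewrite (Rabs_right (y - _)), (Rabs_right (z - _)) by lra. f_equal; ring.
  - apply Zodd_ex in Ho as [p ->]. rewrite plus_IZR, mult_IZR in *.
    rewrite (phi_eq_dist_even y (p + 1)), (phi_eq_dist_even z (p + 1))
      by (rewrite plus_IZR; apply Rabs_le; lra).
    rewrite plus_IZR, (Rabs_left1 (y - _)), (Rabs_left1 (z - _)) by lra.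
    rewrite Rabs_minus_sym. f_equal; ring.
Qed.

Definition lipschitz (f : R -> R) (L : R) : Prop :=
  forall x y, Rabs (f x - f y) <= L * Rabs (x - y).

Lemma phi_lipschitz : lipschitz phi 1.
Proof.
  assert (Hhalf : forall x y, phi x - phi y <= Rabs (x - y)).
  { intros x y. set (q := Int_part ((y + 1) / 2)).
    pose proof (phi_le_dist_even x q).
    pose proof (Rabs_triang (x - y) (y - 2 * IZR q)).
    replace (x - y + (y - 2 * IZR q)) with (x - 2 * IZR q) in * by ring.
    assert (phi y = Rabs (y - 2 * IZR q)) by reflexivity. lra. }
  intros x y. rewrite Rmult_1_l. apply Rabs_le.
  pose proof (Hhalf x y). pose proof (Hhalf y x) as Hyx. rewrite Rabs_minus_sym in Hyx. lra.
Qed.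

Lemma lipschitz_increment f L c b t : lipschitz f L -> 0 <= c -> 0 <= b ->
  lipschitz (fun x => c * (f (b * (x + t)) - f (b * x))) (c * (2 * L * b)).
Proof.
  intros Hf Hc Hb x y.
  rewrite <- Rmult_minus_distr_l, Rabs_mult, (Rabs_pos_eq c Hc), Rmult_assoc.
  apply Rmult_le_compat_l; [exact Hc|].
  replace (f (b * (x + t)) - f (b * x) - (f (b * (y + t)) - f (b * y)))
    with ((f (b * (x + t)) - f (b * (y + t))) - (f (b * x) - f (b * y))) by ring.
  eapply Rle_trans; [apply Rabs_triang|]. rewrite Rabs_Ropp.
  pose proof (Hf (b * (x + t)) (b * (y + t))). pose proof (Hf (b * x) (b * y)).
  replace (b * (x + t) - b * (y + t)) with (b * (x - y)) in * by ring.
  replace (b * x - b * y) with (b * (x - y)) in * by ring.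
  rewrite Rabs_mult, (Rabs_pos_eq b Hb) in *. lra.
Qed.

Lemma lipschitz_sum_f_R0 (G : nat -> R -> R) (L : nat -> R) n :
  (forall k, lipschitz (G k) (L k)) ->
  lipschitz (fun x => sum_f_R0 (fun k => G k x) n) (sum_f_R0 L n).
Proof.
  intros HG x y. induction n as [|n IH]; simpl; [apply HG|].
  replace (sum_f_R0 (fun k => G k x) n + G (S n) x - (sum_f_R0 (fun k => G k y) n + G (S n) y))
    with ((sum_f_R0 (fun k => G k x) n - sum_f_R0 (fun k => G k y) n) + (G (S n) x - G (S n) y))
    by ring.
  eapply Rle_trans; [apply Rabs_triang|]. pose proof (HG (S n) x y). lra.
Qed.

Lemma lipschitz_Rabs_div f L t : t <> 0 -> lipschitz f L ->
  lipschitz (fun x => Rabs (f x / t)) (L / Rabs t).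
Proof.
  intros Ht Hf x y. eapply Rle_trans; [apply Rabs_triang_inv2|].
  unfold Rdiv. rewrite <- Rmult_minus_distr_r, Rabs_mult, Rabs_inv.
  replace (L * / Rabs t * Rabs (x - y)) with (L * Rabs (x - y) * / Rabs t) by ring.
  apply Rmult_le_compat_r; [left; apply Rinv_0_lt_compat, Rabs_pos_lt, Ht | apply Hf].
Qed.

Lemma ex_RInt_lipschitz f L : lipschitz f L -> forall u v, ex_RInt f u v.
Proof.
  intros Hf u v. apply (@ex_RInt_continuous R_CompleteNormedModule). intros z _.
  apply continuity_pt_filterlim. intros eps Heps.
  assert (HL : 0 < Rabs L + 1) by (pose proof (Rabs_pos L); lra).
  exists (eps / (Rabs L + 1)). split; [apply Rdiv_lt_0_compat; lra|].
  intros y [_ Hy]. simpl in *. unfold R_dist in *.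
  apply Rle_lt_trans with ((Rabs L + 1) * Rabs (y - z)).
  - eapply Rle_trans; [apply Hf|].
    apply Rmult_le_compat_r; [apply Rabs_pos | pose proof (Rle_abs L); lra].
  - apply (Rmult_lt_compat_l (Rabs L + 1)) in Hy; [|exact HL].
    replace ((Rabs L + 1) * (eps / (Rabs L + 1))) with eps in Hy by (field; lra). exact Hy.
Qed.

Lemma sum_geom_le r n : 1 < r -> sum_f_R0 (fun k => r ^ k) n <= r ^ S n / (r - 1).
Proof.
  intros Hr. rewrite tech3 by lra.
  replace ((1 - r ^ S n) / (1 - r)) with (r ^ S n / (r - 1) - / (r - 1)) by (field; lra).
  assert (0 < / (r - 1)) by (apply Rinv_0_lt_compat; lra). lra.
Qed.

Definition osc_const (q : R) : R := 1 / 2 - 1 / (2 * (q - 1)).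

Lemma osc_const_pos q : 2 < q -> 0 < osc_const q.
Proof.
  intros Hq. unfold osc_const.
  enough (1 / (2 * (q - 1)) < 1 / 2) by lra.
  apply Rmult_lt_reg_r with (2 * (q - 1)); [lra|].
  unfold Rdiv. rewrite Rmult_assoc, Rinv_l by lra. lra.
Qed.

Lemma lacunary_increment_ge a b x s n m : 0 < a -> 0 < b -> 2 < a * b -> Rabs s = 1 ->
  IZR m <= b ^ n * x <= IZR m + 1 -> IZR m <= b ^ n * x + s / 2 <= IZR m + 1 ->
  a ^ n * osc_const (a * b) <=
  Rabs (sum_f_R0 (fun k => a ^ k * (phi (b ^ k * (x + s / (2 * b ^ n))) - phi (b ^ k * x))) n).
Proof.
  intros Ha Hb Hab Hs Hx Hxs.
  set (h := s / (2 * b ^ n)).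
  set (d := fun k => a ^ k * (phi (b ^ k * (x + h)) - phi (b ^ k * x))).
  pose proof (pow_lt b n Hb) as Hbn. pose proof (pow_lt a n Ha) as Han.
  assert (Hh : Rabs h = / (2 * b ^ n)).
  { unfold h, Rdiv. rewrite Rabs_mult, Rabs_inv, Hs, (Rabs_right (2 * b ^ n)) by lra. ring. }
  assert (Hdn : Rabs (d n) = a ^ n / 2).
  { unfold d. rewrite Rabs_mult, (Rabs_right (a ^ n)) by lra.
    replace (b ^ n * (x + h)) with (b ^ n * x + s / 2) by (unfold h; field; lra).
    rewrite (phi_isometric_unit_interval m) by lra.
    replace (b ^ n * x + s / 2 - b ^ n * x) with (s / 2) by ring.
    unfold Rdiv. rewrite Rabs_mult, Hs, Rabs_inv, (Rabs_right 2) by lra. ring. }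
  assert (Hdk : forall k, Rabs (d k) <= (a * b) ^ k * Rabs h).
  { intros k. unfold d. rewrite Rabs_mult, (Rabs_right (a ^ k)) by (apply Rle_ge, pow_le; lra).
    rewrite Rpow_mult_distr, Rmult_assoc. apply Rmult_le_compat_l; [apply pow_le; lra|].
    eapply Rle_trans; [apply phi_lipschitz|].
    replace (b ^ k * (x + h) - b ^ k * x) with (b ^ k * h) by ring.
    rewrite Rabs_mult, (Rabs_right (b ^ k)) by (apply Rle_ge, pow_le; lra). lra. }
  fold d. unfold osc_const.
  assert (0 < 1 / (2 * (a * b - 1))) by (apply Rdiv_lt_0_compat; lra).
  destruct n as [|n].
  - change (sum_f_R0 d 0) with (d 0%nat). rewrite Hdn. simpl. lra.
  - change (sum_f_R0 d (S n)) with (sum_f_R0 d n + d (S n)).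
    assert (Hlow : Rabs (sum_f_R0 d n) <= a ^ S n * (1 / (2 * (a * b - 1)))).
    { eapply Rle_trans; [apply sum_f_R0_triangle|].
      eapply Rle_trans; [apply sum_Rle; intros k _; apply Hdk|].
      rewrite <- scal_sum. eapply Rle_trans.
      - apply Rmult_le_compat_l; [apply Rabs_pos | apply (sum_geom_le (a * b)); lra].
      - rewrite Hh, Rpow_mult_distr. right. field. split; lra. }
    pose proof (Rabs_triang_inv (d (S n)) (- sum_f_R0 d n)) as Htri.
    rewrite Rabs_Ropp in Htri.
    replace (d (S n) - - sum_f_R0 d n) with (sum_f_R0 d n + d (S n)) in Htri by ring.
    rewrite Hdn in Htri. lra.
Qed.

Lemma pow_unbounded q X : 1 < q -> exists N, forall n, (N <= n)%nat -> X <= q ^ n.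
Proof.
  intros Hq. destruct (Pow_x_infinity q ltac:(rewrite Rabs_right; lra) X) as [N HN].
  exists N. intros n Hn. specialize (HN n Hn).
  rewrite Rabs_right in HN by (apply Rle_ge, pow_le; lra). lra.
Qed.

Lemma Rpower_inv_double_pow_le b beta n : 0 < b -> 0 <= beta ->
  Rpower (/ (2 * b ^ n)) beta <= / Rpower b beta ^ n.
Proof.
  intros Hb Hbeta. pose proof (pow_lt b n Hb).
  apply Rle_trans with (Rpower (/ b ^ n) beta).
  - apply Rle_Rpower_l; [exact Hbeta|].
    split; [apply Rinv_0_lt_compat; lra | apply Rinv_le_contravar; lra].
  - right. rewrite <- (Rpower_pow n (Rpower b beta)) by (unfold Rpower; apply exp_pos).
    rewrite Rpower_mult, <- Rpower_Ropp. unfold Rpower. rewrite ln_Rinv, ln_pow by lra.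
    f_equal. ring.
Qed.

Lemma limsup_at0_pinfty_of_scales (g : R -> R) b q c : 1 < b -> 1 < q -> 0 < c ->
  (forall n, exists t, Rabs t = / (2 * b ^ n) /\ c * q ^ n <= g t) ->
  limsup_at0_pinfty g.
Proof.
  intros Hb Hq Hc Hg C r Hr.
  destruct (pow_unbounded q (C / c + 1) Hq) as [N1 HN1].
  destruct (pow_unbounded b (/ r) Hb) as [N2 HN2].
  destruct (Hg (N1 + N2)%nat) as [t [Ht Hgt]].
  specialize (HN1 (N1 + N2)%nat ltac:(lia)). specialize (HN2 (N1 + N2)%nat ltac:(lia)).
  set (n := (N1 + N2)%nat) in *.
  pose proof (pow_lt b n ltac:(lra)) as Hbn. pose proof (Rinv_0_lt_compat r Hr).
  exists t. split; [split|].
  - rewrite Ht. apply Rinv_0_lt_compat. lra.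
  - rewrite Ht, <- (Rinv_inv r). apply Rinv_lt_contravar; nra.
  - apply (Rmult_le_compat_l c) in HN1; [|lra].
    replace (c * (C / c + 1)) with (C + c) in HN1 by (field; lra). lra.
Qed.

Lemma not_holder_at_of_limsup f x beta :
  limsup_at0_pinfty (fun t => Rabs (f (x + t) - f x) / Rpower (Rabs t) beta) ->
  ~ holder_at f x beta.
Proof.
  intros Hlim [r [C [Hr [_ HC]]]].
  destruct (Hlim C r Hr) as [t [[Ht0 Htr] Hlt]].
  assert (Hnz : t <> 0) by (intros ->; rewrite Rabs_R0 in Ht0; lra).
  specialize (HC (x + t)). replace (x + t - x) with t in HC by ring.
  unfold abs_pow in HC. destruct (Req_EM_T t 0) as [E|_]; [contradiction|].
  apply Rabs_lt_between in Htr.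
  specialize (HC ltac:(lra)). pose proof (exp_pos (beta * ln (Rabs t))) as Hpow.
  fold (Rpower (Rabs t) beta) in Hpow.
  apply (Rmult_lt_compat_r (Rpower (Rabs t) beta)) in Hlt; [|exact Hpow].
  unfold Rdiv in Hlt. rewrite Rmult_assoc, Rinv_l in Hlt by lra. lra.
Qed.

Lemma not_ex_derive_of_limsup f x :
  limsup_at0_pinfty (fun t => Rabs (f (x + t) - f x) / Rpower (Rabs t) 1) ->
  ~ ex_derive f x.
Proof.
  intros Hlim Hd. apply Derive_correct, is_derive_Reals in Hd.
  set (l := Derive f x) in *.
  destruct (Hd 1 ltac:(lra)) as [[d Hdp] Hdel].
  destruct (Hlim (Rabs l + 1) d Hdp) as [t [Ht Hlt]].
  assert (Hnz : t <> 0) by (intros ->; rewrite Rabs_R0 in Ht; lra).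
  specialize (Hdel t Hnz ltac:(simpl; lra)).
  rewrite Rpower_1 in Hlt by lra.
  pose proof (Rabs_triang_inv ((f (x + t) - f x) / t) l).
  unfold Rdiv in *. rewrite Rabs_mult, Rabs_inv in *. lra.
Qed.

Lemma RInt_ge_subinterval g a c d b : a <= c -> c <= d -> d <= b ->
  (forall u v, ex_RInt g u v) -> (forall x, 0 <= g x) -> RInt g c d <= RInt g a b.
Proof.
  intros Hac Hcd Hdb Hex Hg.
  rewrite <- (RInt_Chasles g a c b), <- (RInt_Chasles g c d b) by apply Hex.
  change plus with Rplus.
  pose proof (RInt_ge_0 g a c Hac (Hex _ _) (fun x _ => Hg x)).
  pose proof (RInt_ge_0 g d b Hdb (Hex _ _) (fun x _ => Hg x)). lra.
Qed.

Lemma RInt_ge_half_cells g B V N : 0 < B ->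
  (forall u v, ex_RInt g u v) -> (forall x, 0 <= g x) ->
  (forall (j : nat) x, INR j / B <= x <= (INR j + / 2) / B -> V <= g x) ->
  INR N * (V / (2 * B)) <= RInt g 0 (INR N / B).
Proof.
  intros HB Hex Hg HV.
  assert (Hcell : forall j : nat, V / (2 * B) <= RInt g (INR j / B) (INR (S j) / B)).
  { intros j. rewrite S_INR.
    rewrite <- (RInt_Chasles g _ ((INR j + / 2) / B)) by apply Hex. change plus with Rplus.
    assert (Hmid : (INR j + / 2) / B <= (INR j + 1) / B)
      by (apply Rmult_le_compat_r; [left; apply Rinv_0_lt_compat|]; lra).
    pose proof (RInt_ge_0 g _ _ Hmid (Hex _ _) (fun x _ => Hg x)).
    assert (Hfirst : RInt (fun _ => V) (INR j / B) ((INR j + / 2) / B)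
                     <= RInt g (INR j / B) ((INR j + / 2) / B)).
    { apply RInt_le; [| apply (@ex_RInt_const R_NormedModule) | apply Hex |].
      - apply Rmult_le_compat_r; [left; apply Rinv_0_lt_compat|]; lra.
      - intros x Hx. apply (HV j). lra. }
    rewrite RInt_const in Hfirst. change scal with Rmult in Hfirst.
    replace (((INR j + / 2) / B - INR j / B) * V) with (V / (2 * B)) in Hfirst by (field; lra).
    lra. }
  induction N as [|N IH].
  - simpl. replace (0 / B) with 0 by (field; lra). rewrite RInt_point. change zero with 0. lra.
  - rewrite <- (RInt_Chasles g 0 (INR N / B)) by apply Hex. change plus with Rplus.
    pose proof (Hcell N). rewrite S_INR in *. lra.
Qed.

Lemma Sorted_map_seq (p : nat -> R) : (forall i, p i <= p (S i)) ->
  forall L s, Sorted Rle (map p (seq s L)).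
Proof.
  intros Hp L. induction L as [|L IH]; intros s; simpl; constructor; [apply IH|].
  destruct L; simpl; constructor. apply Hp.
Qed.

Lemma var_sum_ge_pairs f (p : nat -> R) d :
  (forall i, d <= Rabs (f (p (S (2 * i))) - f (p (2 * i)%nat))) ->
  forall L i, INR L * d <= var_sum f (map p (seq (2 * i) (2 * L + 1))).
Proof.
  intros Hd L. induction L as [|L IH]; intros i; [simpl; lra|].
  replace (2 * S L + 1)%nat with (S (S (2 * L + 1))) by lia.
  specialize (IH (S i)). replace (2 * S i)%nat with (S (S (2 * i))) in IH by lia.
  destruct (2 * L + 1)%nat as [|k] eqn:Hk; [lia|].
  cbn [seq map var_sum] in IH |- *.
  pose proof (Hd i).
  pose proof (Rabs_pos (f (p (S (S (2 * i)))) - f (p (S (2 * i))))).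
  rewrite S_INR. lra.
Qed.

Definition K_decay (alpha : R) (nu : nat) : R := Rpower 2 (- (2 * alpha * INR nu)).
Definition K_freq (nu : nat) : R := 2 ^ (2 * nu).

Lemma K_term_eq alpha nu x k :
  Rpower 2 (- (2 * alpha * INR nu * INR k)) * phi (2 ^ (2 * nu * k) * x)
  = K_decay alpha nu ^ k * phi (K_freq nu ^ k * x).
Proof.
  unfold K_decay, K_freq.
  rewrite <- pow_mult, <- (Rpower_pow k (Rpower 2 _)) by (unfold Rpower; apply exp_pos).
  rewrite Rpower_mult. do 2 f_equal. ring.
Qed.

Lemma K_freq_pow_INR nu n : K_freq nu ^ n = INR (2 ^ (2 * nu * n)).
Proof. rewrite pow_INR. unfold K_freq. rewrite <- pow_mult. reflexivity. Qed.

Lemma K_freq_Rpower nu : K_freq nu = Rpower 2 (2 * INR nu).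
Proof. unfold K_freq. rewrite <- Rpower_pow by lra. f_equal. rewrite mult_INR. simpl. ring. Qed.

Lemma K_freq_pow_scale_even nu n k s : (1 <= nu)%nat ->
  K_freq nu ^ (n + S k) * (IZR s / (2 * K_freq nu ^ n))
  = 2 * IZR (s * 2 ^ Z.of_nat (2 * nu * S k - 2)).
Proof.
  intros Hnu. rewrite mult_IZR, <- pow_IZR. unfold K_freq. rewrite <- !pow_mult.
  replace (2 * nu * (n + S k))%nat with (2 * nu * n + S (S (2 * nu * S k - 2)))%nat by nia.
  set (p := (2 * nu * S k - 2)%nat). set (q := (2 * nu * n)%nat).
  rewrite pow_add. simpl (2 ^ S (S p)). pose proof (pow_lt 2 q ltac:(lra)). field. lra.
Qed.

Section Lacunary_function.

Variables (alpha : R) (nu : nat).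
Hypothesis Halpha : 0 < alpha < 1.
Hypothesis Hnu : 2 * INR nu > 1 / (1 - alpha).

Local Notation a := (K_decay alpha nu).
Local Notation b := (K_freq nu).

Lemma nu_ge1 : (1 <= nu)%nat.
Proof.
  assert (0 < 1 / (1 - alpha)) by (apply Rdiv_lt_0_compat; lra).
  destruct nu; [simpl in Hnu; lra | lia].
Qed.

Lemma K_decay_bounds : 0 < a < 1.
Proof.
  pose proof nu_ge1 as H1. apply le_INR in H1. simpl in H1.
  split; [unfold Rpower; apply exp_pos|].
  unfold K_decay. rewrite <- (Rpower_O 2) by lra. apply Rpower_lt; nra.
Qed.

Lemma K_freq_gt1 : 1 < b.
Proof. pose proof nu_ge1. unfold K_freq. apply Rlt_pow_R1; [lra | lia]. Qed.

Lemma K_decay_freq_Rpower_gt1 beta : alpha < beta -> 1 < a * Rpower b beta.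
Proof.
  intros Hbeta. pose proof nu_ge1 as H1. apply le_INR in H1. simpl in H1.
  unfold K_decay. rewrite K_freq_Rpower, Rpower_mult, <- Rpower_plus, <- (Rpower_O 2) by lra.
  apply Rpower_lt; nra.
Qed.

(* [2 nu (1 - alpha) > 1] says exactly that [a b = 2^(2 nu (1 - alpha)) > 2]. *)
Lemma K_decay_freq_gt2 : 2 < a * b.
Proof.
  unfold K_decay. rewrite K_freq_Rpower, <- Rpower_plus.
  apply Rle_lt_trans with (Rpower 2 1); [rewrite Rpower_1; lra|].
  apply Rpower_lt; [lra|].
  apply (Rmult_gt_compat_r (1 - alpha)) in Hnu; [|lra].
  unfold Rdiv in Hnu. rewrite Rmult_1_l, Rinv_l in Hnu by lra. lra.
Qed.

Lemma ex_series_K_terms x :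
  ex_series (fun k => Rpower 2 (- (2 * alpha * INR nu * INR k)) * phi (2 ^ (2 * nu * k) * x)).
Proof.
  pose proof K_decay_bounds as Ha.
  apply (@ex_series_le R_AbsRing R_CompleteNormedModule) with (b := fun k => a ^ k).
  - intros k. rewrite K_term_eq. unfold norm; simpl; unfold abs; simpl.
    pose proof (phi_bounds (b ^ k * x)). pose proof (pow_lt a k ltac:(lra)).
    rewrite Rabs_right by nra. nra.
  - apply ex_series_geom. rewrite Rabs_right; lra.
Qed.

Lemma K_increment_partial_sum x s n :
  K alpha nu (x + IZR s / (2 * b ^ n)) - K alpha nu x =
  sum_f_R0 (fun k => a ^ k * (phi (b ^ k * (x + IZR s / (2 * b ^ n))) - phi (b ^ k * x))) n.
Proof.
  unfold K. rewrite <- Series_minus by apply ex_series_K_terms.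
  rewrite (Series_incr_n _ (S n)); [simpl pred | lia |].
  2: exact (ex_series_minus _ _ (ex_series_K_terms _) (ex_series_K_terms _)).
  rewrite (Series_ext _ (fun _ => 0 * 0)).
  - rewrite Series_scal_l, Rmult_0_l, Rplus_0_r. apply sum_eq. intros i _.
    rewrite !K_term_eq. ring.
  - intros k. rewrite !K_term_eq. replace (S n + k)%nat with (n + S k)%nat by lia.
    rewrite Rmult_plus_distr_l, (K_freq_pow_scale_even nu n k s nu_ge1), phi_periodic. ring.
Qed.

Lemma K_increment_ge x s m n : Rabs (IZR s) = 1 ->
  IZR m <= b ^ n * x <= IZR m + 1 -> IZR m <= b ^ n * x + IZR s / 2 <= IZR m + 1 ->
  a ^ n * osc_const (a * b) <= Rabs (K alpha nu (x + IZR s / (2 * b ^ n)) - K alpha nu x).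
Proof.
  intros Hs Hx Hxs. pose proof K_decay_bounds. pose proof K_freq_gt1. pose proof K_decay_freq_gt2.
  rewrite K_increment_partial_sum. apply (lacunary_increment_ge _ _ _ _ _ m); lra.
Qed.

Lemma K_increment_ge_some_sign x n : exists s, Rabs (IZR s) = 1 /\
  a ^ n * osc_const (a * b) <= Rabs (K alpha nu (x + IZR s / (2 * b ^ n)) - K alpha nu x).
Proof.
  destruct (base_Int_part (b ^ n * x)) as [Hlo Hhi].
  set (m := Int_part (b ^ n * x)) in *.
  destruct (Rle_lt_dec (b ^ n * x) (IZR m + / 2)).
  - exists 1%Z. assert (Hs : Rabs (IZR 1) = 1) by apply Rabs_R1.
    split; [exact Hs | apply (K_increment_ge _ _ m); lra].
  - exists (-1)%Z. assert (Hs : Rabs (IZR (-1)) = 1) by (rewrite Rabs_left; lra).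
    split; [exact Hs | apply (K_increment_ge _ _ m); lra].
Qed.

Lemma Rabs_half_scale s n : Rabs (IZR s) = 1 -> Rabs (IZR s / (2 * b ^ n)) = / (2 * b ^ n).
Proof.
  intros Hs. pose proof K_freq_gt1. pose proof (pow_lt b n ltac:(lra)).
  unfold Rdiv. rewrite Rabs_mult, Rabs_inv, Hs, (Rabs_right (2 * b ^ n)) by lra. ring.
Qed.

Lemma K_holder_quotient_unbounded x beta : alpha < beta <= 1 ->
  limsup_at0_pinfty (fun t => Rabs (K alpha nu (x + t) - K alpha nu x) / Rpower (Rabs t) beta).
Proof.
  intros Hbeta. pose proof K_decay_bounds as Ha. pose proof K_freq_gt1 as Hb.
  apply (limsup_at0_pinfty_of_scales _ b (a * Rpower b beta) (osc_const (a * b)));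
    [exact Hb | apply K_decay_freq_Rpower_gt1; lra | apply osc_const_pos, K_decay_freq_gt2|].
  intros n. destruct (K_increment_ge_some_sign x n) as [s [Hs HK]].
  exists (IZR s / (2 * b ^ n)). rewrite Rabs_half_scale by exact Hs. split; [reflexivity|].
  pose proof (Rpower_inv_double_pow_le b beta n ltac:(lra) ltac:(lra)) as Hpow.
  set (Y := Rpower (/ (2 * b ^ n)) beta) in *.
  assert (HY : 0 < Y) by (unfold Y, Rpower; apply exp_pos).
  assert (Hq : 0 < Rpower b beta ^ n) by (apply pow_lt; unfold Rpower; apply exp_pos).
  assert (HYinv : Rpower b beta ^ n <= / Y)
    by (rewrite <- (Rinv_inv (Rpower b beta ^ n)); apply Rinv_le_contravar; lra).
  pose proof (osc_const_pos _ K_decay_freq_gt2). pose proof (pow_lt a n ltac:(lra)).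
  rewrite Rpow_mult_distr. unfold Rdiv.
  replace (osc_const (a * b) * (a ^ n * Rpower b beta ^ n))
    with (a ^ n * osc_const (a * b) * Rpower b beta ^ n) by ring.
  apply Rmult_le_compat; nra.
Qed.

Lemma K_quotient_lipschitz n : exists L,
  lipschitz
    (fun x => Rabs ((K alpha nu (x + 1 / (2 * b ^ n)) - K alpha nu x) / (1 / (2 * b ^ n)))) L.
Proof.
  pose proof K_decay_bounds. pose proof K_freq_gt1. pose proof (pow_lt b n ltac:(lra)).
  set (t := 1 / (2 * b ^ n)).
  assert (Ht : t <> 0) by (unfold t; apply Rgt_not_eq, Rdiv_lt_0_compat; lra).
  set (G := fun k x => a ^ k * (phi (b ^ k * (x + t)) - phi (b ^ k * x))).
  set (L := fun k => a ^ k * (2 * 1 * b ^ k)).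
  assert (HG : forall k, lipschitz (G k) (L k)).
  { intros k. apply lipschitz_increment; [exact phi_lipschitz | |]; apply pow_le; lra. }
  exists (sum_f_R0 L n / Rabs t). intros x y. unfold t.
  rewrite !(K_increment_partial_sum _ 1).
  exact (lipschitz_Rabs_div _ _ t Ht (lipschitz_sum_f_R0 G L n HG) x y).
Qed.

Lemma K_L1_quotient_unbounded M : 1 <= M ->
  limsup_at0_pinfty (fun t =>
    / (2 * M) * RInt (fun x => Rabs ((K alpha nu (x + t) - K alpha nu x) / t)) (- M) M).
Proof.
  intros HM. pose proof K_decay_bounds as Ha. pose proof K_freq_gt1 as Hb.
  pose proof (osc_const_pos _ K_decay_freq_gt2) as Hc.
  apply (limsup_at0_pinfty_of_scales _ b (a * b) (osc_const (a * b) / (2 * M)));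
    [exact Hb | pose proof K_decay_freq_gt2; lra | apply Rdiv_lt_0_compat; lra|].
  intros n. set (B := b ^ n). assert (HB : 0 < B) by (apply pow_lt; lra).
  assert (Ht : 0 < 1 / (2 * B)) by (apply Rdiv_lt_0_compat; lra).
  exists (1 / (2 * B)). split; [rewrite Rabs_right by lra; field; lra|].
  set (g := fun x => Rabs ((K alpha nu (x + 1 / (2 * B)) - K alpha nu x) / (1 / (2 * B)))).
  destruct (K_quotient_lipschitz n) as [L HL].
  pose proof (ex_RInt_lipschitz g L HL) as Hex.
  assert (Hg : forall x, 0 <= g x) by (intros; apply Rabs_pos).
  set (V := a ^ n * osc_const (a * b) * (2 * B)).
  assert (HV : forall (j : nat) x, INR j / B <= x <= (INR j + / 2) / B -> V <= g x).
  { intros j x [Hx1 Hx2].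
    apply (Rmult_le_compat_l B) in Hx1, Hx2; [|lra..].
    replace (B * (INR j / B)) with (INR j) in Hx1 by (field; lra).
    replace (B * ((INR j + / 2) / B)) with (INR j + / 2) in Hx2 by (field; lra).
    pose proof (K_increment_ge x 1 (Z.of_nat j) n Rabs_R1) as HK.
    rewrite <- INR_IZR_INZ in HK. fold B in HK. specialize (HK ltac:(lra) ltac:(lra)).
    unfold g, V. unfold Rdiv at 1. rewrite Rabs_mult, Rabs_inv, (Rabs_right (1 / (2 * B))) by lra.
    replace (/ (1 / (2 * B))) with (2 * B) by (field; lra).
    apply Rmult_le_compat_r; lra. }
  pose proof (RInt_ge_half_cells g B V (2 ^ (2 * nu * n)) HB Hex Hg HV) as Hcells.
  rewrite <- K_freq_pow_INR in Hcells. fold B in Hcells.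
  replace (B / B) with 1 in Hcells by (field; lra).
  pose proof (RInt_ge_subinterval g (- M) 0 1 M ltac:(lra) ltac:(lra) HM Hex Hg).
  assert (HBV : B * (V / (2 * B)) = osc_const (a * b) * (a * b) ^ n).
  { unfold V, B. rewrite Rpow_mult_distr. field. fold B. lra. }
  rewrite HBV in Hcells. fold g.
  replace (osc_const (a * b) / (2 * M) * (a * b) ^ n)
    with (/ (2 * M) * (osc_const (a * b) * (a * b) ^ n)) by (field; lra).
  apply Rmult_le_compat_l; [left; apply Rinv_0_lt_compat|]; lra.
Qed.

Lemma K_not_locally_BV : ~ locally_BV (K alpha nu).
Proof.
  intros HBV. destruct (HBV 0 1 ltac:(lra)) as [V HV].
  pose proof K_decay_bounds as Ha. pose proof K_freq_gt1 as Hb.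
  pose proof (osc_const_pos _ K_decay_freq_gt2) as Hc.
  destruct (pow_unbounded (a * b) (V / osc_const (a * b) + 1)) as [n Hn];
    [pose proof K_decay_freq_gt2; lra|].
  specialize (Hn n (le_n n)).
  set (NB := (2 ^ (2 * nu * n))%nat). set (B := b ^ n).
  assert (HNB : INR NB = B) by (unfold NB, B; rewrite K_freq_pow_INR; reflexivity).
  assert (HB : 0 < B) by (apply pow_lt; lra).
  set (p := fun j : nat => INR j * (1 / (2 * B))).
  assert (Hpairs : forall i, a ^ n * osc_const (a * b)
                             <= Rabs (K alpha nu (p (S (2 * i))) - K alpha nu (p (2 * i)%nat))).
  { intros i. unfold p. rewrite S_INR, Rmult_plus_distr_r, Rmult_1_l.
    replace (1 / (2 * B)) with (IZR 1 / (2 * b ^ n)) by reflexivity.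
    apply (K_increment_ge _ _ (Z.of_nat i)); [apply Rabs_R1 | |];
      rewrite <- INR_IZR_INZ; fold B;
      replace (B * (INR (2 * i) * (1 / (2 * B)))) with (INR i)
        by (rewrite mult_INR; simpl; field; lra); lra. }
  pose proof (var_sum_ge_pairs (K alpha nu) p _ Hpairs NB 0) as Hvar.
  assert (Hpts : forall y, In y (map p (seq (2 * 0) (2 * NB + 1))) -> 0 <= y <= 1).
  { intros y Hy. apply in_map_iff in Hy as [j [<- Hj]]. apply in_seq in Hj.
    assert (Hj2 : INR j <= 2 * INR NB)
      by (replace 2 with (INR 2) by reflexivity; rewrite <- mult_INR; apply le_INR; lia).
    rewrite HNB in Hj2. pose proof (pos_INR j). unfold p.
    replace (INR j * (1 / (2 * B))) with (INR j / (2 * B)) by (field; lra).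
    split; [apply Rdiv_le_0_compat; lra|].
    apply Rmult_le_reg_r with (2 * B); [lra|]. unfold Rdiv. rewrite Rmult_assoc, Rinv_l; lra. }
  assert (Hsorted : Sorted Rle (map p (seq (2 * 0) (2 * NB + 1)))).
  { apply Sorted_map_seq. intros i. unfold p. rewrite S_INR.
    assert (0 < 1 / (2 * B)) by (apply Rdiv_lt_0_compat; lra). nra. }
  specialize (HV _ Hpts Hsorted).
  rewrite HNB in Hvar. unfold B in Hvar.
  apply (Rmult_le_compat_l (osc_const (a * b))) in Hn; [|lra].
  replace (osc_const (a * b) * (V / osc_const (a * b) + 1)) with (V + osc_const (a * b)) in Hn
    by (field; lra).
  rewrite Rpow_mult_distr in Hn. nra.
Qed.

End Lacunary_function.

Theorem corollary2 (alpha : R) (nu : nat)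
  (Halpha : 0 < alpha < 1) (Hnu : 2 * INR nu > 1 / (1 - alpha)) :
  (forall x beta, alpha < beta <= 1 ->
     limsup_at0_pinfty (fun t => Rabs (K alpha nu (x + t) - K alpha nu x) / Rpower (Rabs t) beta))
  /\ (forall x beta, alpha < beta <= 1 -> ~ holder_at (K alpha nu) x beta)
  /\ (forall x, ~ ex_derive (K alpha nu) x)
  /\ (forall M, 1 <= M ->
     limsup_at0_pinfty (fun t =>
       / (2 * M) * RInt (fun x => Rabs ((K alpha nu (x + t) - K alpha nu x) / t)) (- M) M))
  /\ ~ locally_BV (K alpha nu).
Proof.
  repeat split.
  - intros x beta Hbeta. exact (K_holder_quotient_unbounded _ _ Halpha Hnu x beta Hbeta).
  - intros x beta Hbeta. apply not_holder_at_of_limsup, K_holder_quotient_unbounded; assumption.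
  - intros x. apply not_ex_derive_of_limsup, K_holder_quotient_unbounded; [assumption.. | lra].
  - intros M HM. exact (K_L1_quotient_unbounded _ _ Halpha Hnu M HM).
  - exact (K_not_locally_BV _ _ Halpha Hnu).
Qed.
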